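(* For $u_1,\dots,u_k\in\mathcal B$ let $R'(u_1,\dots,u_k)=\sum_{n=0}^\infty\sum_{j\in\{1,\dots,k\}^n}R'[u_{j(1)},\dots,u_{j(n)}]$ (formal series). Then for every $v\in\mathcal B$, $R'(u_1,\dots,u_k)v=v+R'(u_1,\dots,u_k)\Big(\gamma\Big[\big(\textstyle\sum_{i=1}^ku_i\big)\,R'(u_1,\dots,u_k)\big(\textstyle\sum_{j=1}^ku_j\big)\Big]v\Big)+R'(u_1,\dots,u_k)\Big(\textstyle\sum_{i=1}^k\Lambda(u_i\otimes v)\Big)$, as formal series.
   Context: Let $\mathcal B$ be a unital $*$-algebra with star-linear maps $\gamma:\mathcal B\to\mathcal B$ and $\Lambda:\mathcal B\otimes_{alg}\mathcal B\to\mathcal B$. The linear operators $R'[u_1,\dots,u_m]$ on $\mathcal B$ ($m\ge0$) are defined recursively: $R'[\emptyset]=\mathrm{id}_{\mathcal B}$, and $R'[u_1,\dots,u_m]=\sum_{\pi\in\mathrm{Int}(m)}w(V_1)\circ\cdots\circ w(V_r)$, where $\mathrm{Int}(m)$ is the set of interval partitions of $\{1,\dots,m\}$, $V_1,\dots,V_r$ are the blocks of $\pi$ from left to right, $w(\{i\})$ is $v\mapsto\Lambda(u_i\otimes v)$, and for a block $V=\{p,\dots,q\}$ with $q>p$, $w(V)$ is left multiplication by $\gamma\big[u_p\,R'[u_{p+1},\dots,u_{q-1}](u_q)\big]$. *)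

From HB Require Import structures.
From mathcomp Require Import all_boot all_order all_algebra.
Set Implicit Arguments. Unset Strict Implicit. Unset Printing Implicit Defensive.
Import Order.TTheory GRing.Theory Num.Theory.
Local Open Scope ring_scope.

(* ---------- Interval partitions of {1,...,m} ----------
   An interval partition is encoded by the list of the sizes of its blocks,
   read from left to right (a composition of m). *)

Fixpoint allseqs (len m : nat) : seq (seq nat) :=
  match len with
  | 0 => [:: [::]]
  | len'.+1 => flatten [seq [seq p :: c | c <- allseqs len' m] | p <- iota 1 m]
  end.

Definition intpart (m : nat) : seq (seq nat) :=
  [seq c <- flatten [seq allseqs l m | l <- iota 0 m.+1] | sumn c == m].

Fixpoint blocks (T : Type) (c : seq nat) (s : seq T) : seq (seq T) :=
  match c with
  | [::] => [::]
  | p :: c' => take p s :: blocks c' (drop p s)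
  end.

Section Rprime.
Variables (C : numClosedFieldType) (B : algType C).
Variables (gamma : B -> B) (Lambda : B -> B -> B).
(* Lambda u v stands for Lambda(u (x) v) *)

(* R' with a fuel argument (fuel >= size s suffices) *)
Fixpoint Rp_fuel (fuel : nat) (s : seq B) : B -> B :=
  match fuel with
  | 0 => id
  | fuel'.+1 =>
    let w (blk : seq B) : B -> B :=
      match blk with
      | [::] => id
      | [:: u] => fun x => Lambda u x
      | u :: (t1 :: t') =>
          fun x => gamma (u * Rp_fuel fuel' (belast t1 t') (last t1 t')) * x
      end in
    fun v => \sum_(c <- intpart (size s))
               foldr (fun blk f => fun x => w blk (f x)) id (blocks c s) v
  end.

Definition Rp (s : seq B) : B -> B := Rp_fuel (size s) s.

(* ---------- Formal series in k non-commuting letters ----------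
   A series is given by its coefficients, indexed by words over {1..k}. *)
Variable k : nat.
Definition word := seq 'I_k.

Definition Rser (u : 'I_k -> B) : word -> B -> B := fun w => Rp (map u w).

Definition opapp (F : word -> B -> B) (f : word -> B) : word -> B :=
  fun w => \sum_(i < (size w).+1) F (take i w) (f (drop i w)).

Definition sermul (f g : word -> B) : word -> B :=
  fun w => \sum_(i < (size w).+1) f (take i w) * g (drop i w).

Definition cst (x : B) : word -> B := fun w => if w is [::] then x else 0.

Definition deg1 (c : 'I_k -> B) : word -> B :=
  fun w => if w is [:: i] then c i else 0.

End Rprime.

From HB Require Import structures.
From mathcomp Require Import all_boot all_order all_algebra.
From mathcomp Require Import zify.
Import Order.TTheory GRing.Theory Num.Theory.
Set Implicit Arguments. Unset Strict Implicit. Unset Printing Implicit Defensive.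

(** Splitting off the last block {i+1,...,m} of an interval partition gives
      R'[u_1,...,u_m] v = \sum_(i < m) R'[u_1,...,u_i] (w({i+1,...,m}) v)
    for m >= 1.  Summed over all words this reads R'(u) v = v + R'(u) (W v),
    where the coefficient of W v at a word j of length one is
    Lambda(u_j (x) v), and at a longer word j_1...j_n it is
    gamma[u_(j_1) R'[u_(j_2),...,u_(j_(n-1))](u_(j_n))] v, i.e. the coefficient
    of gamma[X R'(u) X] v with X = \sum_i u_i.  The two parts of W v are
    supported on disjoint sets of words, so R'(u) can be applied to them
    separately without knowing that it is additive. *)

Lemma blocksE (T : Type) (c : seq nat) (s : seq T) : blocks c s = reshape c s.
Proof. by elim: c s => //= p c IH s; rewrite IH. Qed.

Lemma size_mem_reshape (T : eqType) (c : seq nat) (s : seq T) blk :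
  blk \in reshape c s -> size blk <= size s.
Proof.
elim: c s => //= p c IH s; rewrite in_cons => /orP [/eqP -> | /IH].
  by rewrite size_take_min geq_minr.
by move/leq_trans; apply; rewrite size_drop leq_subr.
Qed.

Lemma mem_allseqs l m c :
  (c \in allseqs l m) = (size c == l) && all (fun p => 0 < p <= m) c.
Proof.
elim: l c => [|l IH] [|a c] //=; first by apply/allpairsP => -[[p c'] [_ _]].
rewrite eqSS; apply/allpairsP/and3P.
  case=> -[p c'] [/= Hp Hc' [-> ->]].
  by move: Hc' Hp; rewrite IH mem_iota => /andP [-> ->]; split=> //; lia.
case=> Hs Ha Hc; exists (a, c).
by rewrite /= mem_iota IH Hs Hc; split=> //; lia.
Qed.

Lemma uniq_allseqs l m : uniq (allseqs l m).
Proof.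
elim: l => //= l IH.
apply: (allpairs_uniq (iota_uniq 1 m) IH).
by move=> [a c] [a' c'] _ _ /= [-> ->].
Qed.

Lemma size_le_sumn (c : seq nat) : all (fun p => 0 < p) c -> size c <= sumn c.
Proof. by elim: c => //= a c IH /andP [Ha /IH]; lia. Qed.

Lemma mem_leq_sumn (c : seq nat) p : p \in c -> p <= sumn c.
Proof.
by elim: c => //= a c IH; rewrite in_cons => /orP [/eqP -> | /IH]; lia.
Qed.

Lemma mem_intpart m c :
  (c \in intpart m) = all (fun p => 0 < p) c && (sumn c == m).
Proof.
rewrite mem_filter andbC; apply: andb_id2r => /eqP Hs; apply/flattenP/idP.
  case=> _ /mapP [l _ ->]; rewrite mem_allseqs => /andP [_ /allP Hc].
  by apply/allP => p /Hc /andP [].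
move=> Hc; exists (allseqs (size c) m); last first.
  rewrite mem_allseqs eqxx; apply/allP => p Hp.
  by rewrite (allP Hc p Hp) -Hs mem_leq_sumn.
by apply: (map_f (allseqs^~ m)); rewrite mem_iota ltnS -Hs size_le_sumn.
Qed.

Lemma uniq_intpart m : uniq (intpart m).
Proof.
apply/filter_uniq; elim: (iota 0 m.+1) (iota_uniq 0 m.+1) => //= l ls IH.
case/andP=> Hl /IH Hls; rewrite cat_uniq uniq_allseqs Hls andbT /=.
apply/hasPn => c /flattenP [_ /mapP [l' Hl' ->]].
rewrite !mem_allseqs => /andP [/eqP Hc' _]; apply/negP => /andP [/eqP Hc _].
by move: Hl; rewrite -Hc Hc' Hl'.
Qed.

Lemma perm_intpartS_rcons m :
  perm_eq (intpart m.+1)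
          [seq rcons c (m.+1 - i) | i <- iota 0 m.+1, c <- intpart i].
Proof.
apply: uniq_perm; first exact: uniq_intpart.
  apply: allpairs_uniq_dep => [|i _|]; [exact: iota_uniq | exact: uniq_intpart|].
  move=> [i c] [i' c'] /allpairsPdep [j [d [_ Hd [-> ->]]]].
  move=> /allpairsPdep [j' [d' [_ Hd' [-> ->]]]] /= /eqP.
  rewrite eqseq_rcons => /andP [/eqP Ed _]; move: Hd Hd'.
  by rewrite Ed !mem_intpart => /andP [_ /eqP <-] /andP [_ /eqP <-].
move=> c'; rewrite mem_intpart; apply/idP/allpairsPdep.
  case/lastP: c' => [|c q] //; rewrite all_rcons sumn_rcons.
  move=> /andP [/andP [Hq Hc] /eqP Hs]; exists (sumn c), c.
  by rewrite mem_iota mem_intpart Hc eqxx; split=> //; [lia | congr rcons; lia].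
case=> i [c [Hi Hc ->]]; move: Hc Hi; rewrite mem_intpart mem_iota.
by rewrite all_rcons sumn_rcons => /andP [-> /eqP ->] /= Hi; apply/andP; lia.
Qed.

Local Open Scope ring_scope.

Section BlockDecomposition.
Variables (C : numClosedFieldType) (B : algType C).
Variables (gamma : B -> B) (Lambda : B -> B -> B).

Local Notation Rp_fuel := (Rp_fuel gamma Lambda).
Local Notation Rp := (Rp gamma Lambda).

Definition block_op_fuel (n : nat) (blk : seq B) : B -> B :=
  match blk with
  | [::] => id
  | [:: u] => Lambda u
  | u :: (t1 :: t') =>
      fun x => gamma (u * Rp_fuel n (belast t1 t') (last t1 t')) * x
  end.

Definition block_op (blk : seq B) : B -> B :=
  match blk with
  | [::] => id
  | [:: u] => Lambda u
  | u :: (t1 :: t') => fun x => gamma (u * Rp (belast t1 t') (last t1 t')) * x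
  end.

Definition compose_ops (W : seq B -> B -> B) (l : seq (seq B)) : B -> B :=
  foldr (fun blk f x => W blk (f x)) id l.

Lemma eq_compose_ops W1 W2 l :
  {in l, forall blk, W1 blk =1 W2 blk} -> compose_ops W1 l =1 compose_ops W2 l.
Proof.
elim: l => //= blk l IH eqW x; rewrite eqW ?mem_head // IH // => blk' Hblk'.
by apply: eqW; rewrite in_cons Hblk' orbT.
Qed.

Lemma compose_ops_rcons W l blk :
  compose_ops W (rcons l blk) =1 compose_ops W l \o W blk.
Proof. by elim: l => //= blk' l IH x; rewrite IH. Qed.

Lemma Rp_fuelS n s v :
  Rp_fuel n.+1 s v =
    \sum_(c <- intpart (size s)) compose_ops (block_op_fuel n) (reshape c s) v.
Proof. by apply: eq_bigr => c _; rewrite -blocksE. Qed.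

Lemma Rp_fuel_succ n s : (size s <= n)%N -> Rp_fuel n.+1 s =1 Rp_fuel n s.
Proof.
elim: n s => [|n IH] s Hs v.
  by case: s Hs => // _; rewrite /= big_cons big_nil addr0.
rewrite !Rp_fuelS; apply: eq_bigr => c _.
apply: eq_compose_ops => -[|a [|t1 t']] // /size_mem_reshape Hsz x.
by rewrite /block_op_fuel IH // size_belast; move: Hsz => /=; lia.
Qed.

Lemma Rp_fuelE n s : (size s <= n)%N -> Rp_fuel n s =1 Rp s.
Proof.
move=> Hn; rewrite /Rp -(subnK Hn); elim: (n - size s)%N => // d IH x.
by rewrite addSn Rp_fuel_succ ?IH // leq_addl.
Qed.

Lemma block_op_fuelE n blk :
  (size blk <= n.+1)%N -> block_op_fuel n blk =1 block_op blk.
Proof.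
by case: blk => [|a [|t1 t']] //= Hn x; rewrite Rp_fuelE // size_belast; lia.
Qed.

Lemma Rp_last_block s v : (0 < size s)%N ->
  Rp s v = \sum_(i < size s) Rp (take i s) (block_op (drop i s) v).
Proof.
case: s => // a t _; set s := a :: t; set m := size t.
rewrite -[LHS]/(Rp_fuel m.+1 s v) Rp_fuelS (perm_big _ (perm_intpartS_rcons m)).
rewrite big_allpairs_dep -[iota 0 m.+1]/(index_iota 0 m.+1) big_mkord.
apply: eq_bigr => i _; have Hi : (i <= m)%N by rewrite -ltnS.
have size_take_i : size (take i s) = i by rewrite size_takel // leqW.
rewrite -(@Rp_fuelE m.+1); last by rewrite size_take_i leqW.
rewrite Rp_fuelS size_take_i !big_seq; apply: eq_bigr => c.
rewrite mem_intpart => /andP [_ /eqP Hc].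
rewrite reshape_rcons Hc; last by rewrite /= -/m; lia.
by rewrite compose_ops_rcons /= block_op_fuelE // size_drop leq_subr.
Qed.

Hypothesis Lambda_r0 : forall z, Lambda z 0 = 0.

Lemma Rp0 s : Rp s 0 = 0.
Proof.
rewrite /Rp; case: (size s) => // n; rewrite Rp_fuelS big1 // => c _.
elim: (reshape c s) => //= -[|a [|t1 t']] l /= ->; by rewrite ?mulr0.
Qed.

End BlockDecomposition.

Lemma linear_map0 (R : pzRingType) (U V : lmodType R) (f : U -> V) :
  (forall a x y, f (a *: x + y) = a *: f x + f y) -> f 0 = 0.
Proof.
move=> f_lin; apply: (@addrI _ (f 0)); rewrite addr0.
by have := f_lin 1 0 0; rewrite !scale1r addr0.
Qed.

Section FormalSeries.
Variables (C : numClosedFieldType) (B : algType C) (k : nat).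
Implicit Types (v : B) (f g : word k -> B) (c : 'I_k -> B) (w : word k).

Lemma cst_eq0 v w : size w != 0%N -> cst v w = 0.
Proof. by case: w. Qed.

Lemma deg1_eq0 c w : size w != 1%N -> deg1 c w = 0.
Proof. by case: w => [|? []]. Qed.

Lemma sermul_deg1_nil c g : sermul (deg1 c) g [::] = 0.
Proof. by rewrite /sermul big_ord1 mul0r. Qed.

Lemma sermul_deg1_cons c g a t : sermul (deg1 c) g (a :: t) = c a * g t.
Proof.
rewrite /sermul !big_ord_recl big1 => [|i _]; last first.
  have lt_i_t : (i < size t)%N := ltn_ord i.
  by rewrite deg1_eq0 ?mul0r // size_take_min !lift0 /=; lia.
by rewrite /= add0n take0 drop0 mul0r add0r addr0.
Qed.

Variable F : word k -> B -> B.
Hypothesis F0 : forall w, F w 0 = 0.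

Lemma opapp_cst v w : opapp F (cst v) w = F w v.
Proof.
rewrite /opapp big_ord_recr /= take_size drop_size big1 ?add0r // => i _.
by rewrite cst_eq0 ?F0 // size_drop subn_eq0 -ltnNge.
Qed.

Lemma opapp_deg1_nil c : opapp F (deg1 c) [::] = 0.
Proof. by rewrite /opapp big_ord1 F0. Qed.

Lemma opapp_deg1_rcons c t a : opapp F (deg1 c) (rcons t a) = F t (c a).
Proof.
rewrite /opapp size_rcons big_ord_recr /= drop_oversize ?size_rcons // F0 addr0.
rewrite big_ord_recr /= -cats1 take_size_cat ?drop_size_cat //.
rewrite big1 ?add0r // => i _.
have lt_i_t : (i < size t)%N := ltn_ord i.
by rewrite deg1_eq0 ?F0 // size_drop size_cat /=; lia.
Qed.

Lemma opapp_deg1_cons c b t :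
  opapp F (deg1 c) (b :: t) = F (belast b t) (c (last b t)).
Proof. by rewrite lastI opapp_deg1_rcons. Qed.

Lemma opappD_disjoint f g w : (forall w', f w' = 0 \/ g w' = 0) ->
  opapp F (f \+ g) w = opapp F f w + opapp F g w.
Proof.
move=> fg0; rewrite /opapp -big_split; apply: eq_bigr => i _ /=.
by case: (fg0 (drop i w)) => ->; rewrite F0 ?addr0 ?add0r.
Qed.

End FormalSeries.

Section LastBlockSeries.
Variables (C : numClosedFieldType) (B : algType C).
Variables (gamma : B -> B) (Lambda : B -> B -> B).
Hypothesis gamma0 : gamma 0 = 0.
Hypothesis Lambda_r0 : forall z, Lambda z 0 = 0.
Variables (k : nat) (u : 'I_k -> B) (v : B).

Local Notation R := (Rser gamma Lambda u).

Let R0 w : R w 0 = 0.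
Proof. exact: Rp0. Qed.

Definition last_block_series (w : word k) : B :=
  if nilp w then 0 else block_op gamma Lambda (map u w) v.

Lemma opapp_last_block_series w :
  opapp R (cst v) w = cst v w + opapp R last_block_series w.
Proof.
rewrite opapp_cst //; have [->|w_neq0] := eqVneq w [::].
  by rewrite /opapp big_ord1 /last_block_series /= (R0 [::]) addr0.
rewrite cst_eq0 ?size_eq0 // add0r /opapp big_ord_recr drop_size take_size /=.
rewrite {2}/last_block_series /= (R0 w) addr0.
rewrite /Rser Rp_last_block ?size_map ?lt0n ?size_eq0 //; apply: eq_bigr => i _.
rewrite /last_block_series /nilp size_drop subn_eq0 leqNgt ltn_ord /=.
by rewrite map_take map_drop.
Qed.

Lemma last_block_seriesE :
  last_block_series =1
    (fun w => gamma (sermul (deg1 u) (opapp R (deg1 u)) w) * v)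
    \+ deg1 (fun i => Lambda (u i) v).
Proof.
case=> [|a [|b t]] /=.
- by rewrite sermul_deg1_nil gamma0 mul0r addr0.
- by rewrite sermul_deg1_cons opapp_deg1_nil // mulr0 gamma0 mul0r add0r.
- rewrite sermul_deg1_cons opapp_deg1_cons // addr0 /last_block_series /=.
  by rewrite belast_map last_map.
Qed.

Lemma last_block_series_disjoint w :
  gamma (sermul (deg1 u) (opapp R (deg1 u)) w) * v = 0
  \/ deg1 (fun i => Lambda (u i) v) w = 0.
Proof.
case: w => [|a [|b t]]; [left | left | by right].
- by rewrite sermul_deg1_nil gamma0 mul0r.
- by rewrite sermul_deg1_cons opapp_deg1_nil // mulr0 gamma0 mul0r.
Qed.

Lemma opapp_last_block_seriesD w :
  opapp R last_block_series w =
    opapp R (fun w' => gamma (sermul (deg1 u) (opapp R (deg1 u)) w') * v) w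
    + opapp R (deg1 (fun i => Lambda (u i) v)) w.
Proof.
rewrite -opappD_disjoint //; last exact: last_block_series_disjoint.
by apply: eq_bigr => i _; rewrite last_block_seriesE.
Qed.

End LastBlockSeries.

Theorem corollary3p14
  (C : numClosedFieldType) (B : algType C)
  (star : B -> B)
  (star_add : forall x y, star (x + y) = star x + star y)
  (star_scale : forall (a : C) x, star (a *: x) = a^* *: star x)
  (star_mul : forall x y, star (x * y) = star y * star x)
  (star_invol : forall x, star (star x) = x)
  (gamma : B -> B) (Lambda : B -> B -> B)
  (gamma_lin : forall (a : C) x y, gamma (a *: x + y) = a *: gamma x + gamma y)
  (gamma_star : forall x, gamma (star x) = star (gamma x))
  (Lambda_linl : forall (a : C) x y z,
      Lambda (a *: x + y) z = a *: Lambda x z + Lambda y z)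
  (Lambda_linr : forall (a : C) x y z,
      Lambda z (a *: x + y) = a *: Lambda z x + Lambda z y)
  (Lambda_star : forall x y, Lambda (star x) (star y) = star (Lambda x y))
  (k : nat) (u : 'I_k -> B) (v : B) :
  let R := Rser gamma Lambda u in
  let X := deg1 u in
  forall w : word k,
    opapp R (cst v) w =
      cst v w
      + opapp R (fun w' => gamma (sermul X (opapp R X) w') * v) w
      + opapp R (deg1 (fun i => Lambda (u i) v)) w.
Proof.
move=> R X w; rewrite {}/R {}/X.
have gamma0 : gamma 0 = 0 by apply: linear_map0.
have Lambda_r0 z : Lambda z 0 = 0.
  exact: linear_map0 (fun a x y => Lambda_linr a x y z).
by rewrite opapp_last_block_series // opapp_last_block_seriesD // addrA.
Qed.
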